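(* Let $n,d\ge2$, $g(s)=((n+1)s-1)^{d-1}-(-1)^{d-1}$, and for $\mathbf s=(s_1,\ldots,s_{n-1})\in\mathbb R^{n-1}$ let $$\mathbf h(\mathbf s)=\Big(s_k\Big(g\big(1-\textstyle\sum_{j=1}^{n-1}s_j\big)+\sum_{j=1}^{n-1}g(s_j)\Big)-g(s_k)\Big)_{1\le k\le n-1}.$$ Write $s_n:=1-\sum_{k=1}^{n-1}s_k$ and $\Delta_{n-1}=\{\mathbf s\in\mathbb R^{n-1}:s_k\ge0,\ \sum_{k=1}^{n-1}s_k\le1\}$. (i) $\mathbf h(\mathbf s)=\mathbf 0$ for every $\mathbf s\in\Delta_{n-1}$ for which there is a nonempty $K\subseteq\{1,\ldots,n\}$ with $s_k=\frac1{|K|}$ for $k\in K$ and $s_k=0$ for $k\in\{1,\ldots,n\}\setminus K$. (ii) If $d=2$, $\mathbf h$ vanishes identically. (iii) If $d$ is odd, $\mathbf h$ has no zeros in $\Delta_{n-1}$ other than those in (i). (iv) If $d\ge4$ is even, $\mathbf h$ vanishes at $\mathbf s\in\Delta_{n-1}$ if and only if there exist disjoint $K_1,K_2\subseteq\{1,\ldots,n\}$, not both empty, such that one of the following holds: (a) $K_1=\emptyset$, $\frac1{|K_2|}>s^*$, $s_k=\frac1{|K_2|}$ for $k\in K_2$ and $s_k=0$ otherwise; (b) $K_2=\emptyset$, $\frac1{|K_1|}\le s^*$, $s_k=\frac1{|K_1|}$ for $k\in K_1$ and $s_k=0$ otherwise; (c) $K_1,K_2\ne\emptyset$, $s_k=a$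 for $k\in K_1$, $s_k=b$ for $k\in K_2$, $s_k=0$ for $k\notin K_1\cup K_2$, where $a\in(0,s^* )$ is a zero of the polynomial $r(s)=\frac{g(s)}{s}-\frac{|K_2|\,g\big(\frac{1-|K_1|s}{|K_2|}\big)}{1-|K_1|s}$ and $b=\frac{1-|K_1|a}{|K_2|}\in(s^*,1]$.
   Context: For $d\ge4$ even, $s^*$ denotes the unique point $s^*\in[\frac1n,\frac2{n+1})$ such that the polynomial $p(s)=g(s)/s$ is strictly decreasing on $[0,s^*]$ and strictly increasing on $[s^*,\infty)$ (its existence is part of a preceding lemma). *)

From mathcomp Require Import all_boot all_order all_algebra.
Set Implicit Arguments. Unset Strict Implicit. Unset Printing Implicit Defensive.
Import Order.TTheory GRing.Theory Num.Theory.
Local Open Scope ring_scope.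

Section Defs.
Variable R : realFieldType.

Definition g (n d : nat) (x : R) : R :=
  ((n.+1)%:R * x - 1) ^+ d.-1 - (-1) ^+ d.-1.

Definition gpoly (n d : nat) : {poly R} :=
  ((n.+1)%:R *: 'X - 1) ^+ d.-1 - ((-1) ^+ d.-1)%:P.

(* the polynomial p(s) = g(s)/s  (g(0) = 0, so 'X divides gpoly) *)
Definition ppoly (n d : nat) : {poly R} := gpoly n d %/ 'X.

Definition h (n d : nat) (s : 'rV[R]_(n.-1)) : 'rV[R]_(n.-1) :=
  \row_k (s 0 k * (g n d (1 - \sum_j s 0 j) + \sum_j g n d (s 0 j))
          - g n d (s 0 k)).

Definition inDelta (n : nat) (s : 'rV[R]_(n.-1)) : Prop :=
  (forall k, 0 <= s 0 k) /\ \sum_k s 0 k <= 1.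

(* extension (s_1,...,s_{n-1}) |-> (s_1,...,s_n), s_n = 1 - sum s_k;
   index i : 'I_n corresponds to i+1 in {1,...,n} *)
Definition sext (n : nat) (s : 'rV[R]_(n.-1)) (i : 'I_n) : R :=
  odflt (1 - \sum_j s 0 j)
        (omap (fun j : 'I_(n.-1) => s 0 j) (insub (val i))).

Definition is_sstar (n d : nat) (t : R) : Prop :=
  [/\ n%:R^-1 <= t, t < 2 / (n.+1)%:R,
      (forall x y, 0 <= x -> x < y -> y <= t ->
          (ppoly n d).[y] < (ppoly n d).[x]) &
      (forall x y, t <= x -> x < y ->
          (ppoly n d).[x] < (ppoly n d).[y])].

End Defs.
Arguments h {R} n d s.

From mathcomp Require Import all_boot all_order all_algebra.
From mathcomp Require Import ring lra.
Set Implicit Arguments. Unset Strict Implicit. Unset Printing Implicit Defensive.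
Import Order.TTheory GRing.Theory Num.Theory.
Local Open Scope ring_scope.

(* Put s_n := 1 - (s_1 + ... + s_(n-1)). Since the s_i sum to 1, h(s) = 0
   exactly when g(s_i) = l * s_i for one l and every i <= n (l is then the
   sum of the g(s_i)). Thus every nonzero coordinate solves p(s_i) = l with
   p(s) = g(s)/s. For odd d the map u |-> u ^+ (d - 1) is strictly convex, so
   p is strictly increasing on (0, oo) and all nonzero coordinates coincide.
   For even d, p is injective on [0, sstar] and on [sstar, oo), so the nonzero
   coordinates take one value a <= sstar and one value b > sstar; in the mixed
   case a = sstar is excluded because p(sstar) < p(b). Finally the constraint
   sum s_i = 1 pins down the values. *)

Section Levels.
Variables (R : realFieldType) (T : finType).
Implicit Types (x : T -> R) (f P : R -> R) (K : {set T}) (a b l v : R).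

Definition proportional f x := exists l, forall i, f (x i) = l * x i.

Lemma proportional_level1 f x K v : f 0 = 0 -> v != 0 ->
  (forall k, x k = if k \in K then v else 0) -> proportional f x.
Proof.
move=> f0 v0 xK; exists (f v / v) => k.
by rewrite xK; case: ifP => _; rewrite ?divfK ?f0 ?mulr0.
Qed.

Lemma proportional_level2 f x K1 K2 a b : f 0 = 0 -> a != 0 -> b != 0 ->
  f a / a = f b / b ->
  (forall k, x k = if k \in K1 then a else if k \in K2 then b else 0) ->
  proportional f x.
Proof.
move=> f0 a0 b0 fab xK; exists (f a / a) => k; rewrite xK.
case: ifP => _; first by rewrite divfK.
by case: ifP => _; rewrite ?fab ?divfK ?f0 ?mulr0.
Qed.

Lemma proportional_ratio f P x : (forall u, 0 < u -> P u * u = f u) ->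
  proportional f x -> exists l, forall i, 0 < x i -> P (x i) = l.
Proof.
move=> fP [l hl]; exists l => i xi_gt0.
by apply: (mulIf (lt0r_neq0 xi_gt0)); rewrite fP.
Qed.

Lemma ratio_shift f a b k1 k2 : k2 != 0 -> b != 0 ->
  1 - k1 * a = k2 * b ->
  f a / a - k2 * f ((1 - k1 * a) / k2) / (1 - k1 * a) = f a / a - f b / b.
Proof.
move=> k2_neq0 b_neq0 ->; rewrite [_ / k2]mulrC mulKf //.
by rewrite invfM mulrACA divff ?mul1r.
Qed.

Lemma sum_level1 K v : \sum_i (if i \in K then v else 0) = #|K|%:R * v.
Proof. by rewrite -big_mkcond sumr_const mulr_natl. Qed.

Lemma sum_level2 K1 K2 a b : [disjoint K1 & K2] ->
  \sum_i (if i \in K1 then a else if i \in K2 then b else 0)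
  = #|K1|%:R * a + #|K2|%:R * b.
Proof.
move=> K12; rewrite -!sum_level1 -big_split; apply: eq_bigr => i _ /=.
by case: ifP => [/(disjointFr K12)->|_]; rewrite ?addr0 ?add0r.
Qed.

Lemma card_set_neq0 K : K != set0 -> #|K|%:R != 0 :> R.
Proof. by rewrite pnatr_eq0 -lt0n card_gt0. Qed.

Lemma level_inv K v : K != set0 -> #|K|%:R * v = 1 -> v = #|K|%:R^-1.
Proof. by move=> /card_set_neq0 K0 Kv; rewrite -[v](mulKf K0) Kv mulr1. Qed.

Lemma level_of_inj (D : {pred R}) P l x K : {in D &, injective P} ->
  (forall i, i \in K -> x i \in D /\ P (x i) = l) ->
  exists a, forall i, i \in K -> x i = a.
Proof.
move=> injP xK; have [->|[i0 /xK[i0D Pi0]]] := set_0Vmem K.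
  by exists 0 => i; rewrite in_set0.
by exists (x i0) => i /xK[iD Pi]; apply: injP => //; rewrite Pi Pi0.
Qed.

End Levels.

Section Support.
Variables (R : realFieldType) (T : finType) (x : T -> R).
Hypotheses (x_ge0 : forall i, 0 <= x i) (sum_x : \sum_i x i = 1).

Lemma exists_gt0 : exists i, 0 < x i.
Proof.
apply/existsP; apply: contraLR (oner_neq0 R) => /existsPn x_le0; rewrite negbK.
rewrite -sum_x big1 // => i _; apply/eqP; rewrite eq_le x_ge0 andbT.
by rewrite leNgt x_le0.
Qed.

Lemma support_one_level (P : R -> R) l :
  {in [pred u | 0 < u] &, injective P} -> (forall i, 0 < x i -> P (x i) = l) ->
  exists K : {set T}, K != set0 /\
    forall k, x k = if k \in K then #|K|%:R^-1 else 0.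
Proof.
move=> injP xP; set K := [set i | 0 < x i].
have [i0 xi0] := exists_gt0.
have K0 : K != set0 by apply/set0Pn; exists i0; rewrite inE.
have [a xa] : exists a, forall i, i \in K -> x i = a.
  by apply: (level_of_inj injP) => i; rewrite inE => xi; split => //; apply: xP.
have xK k : x k = if k \in K then a else 0.
  case: ifP => [/xa//|]; rewrite inE => /negbT xk.
  by apply/eqP; rewrite eq_le x_ge0 andbT leNgt.
have Ka : #|K|%:R * a = 1 by rewrite -sum_level1 -sum_x; apply: eq_bigr.
by exists K; split => // k; rewrite xK -(level_inv K0 Ka).
Qed.

Lemma support_two_levels (P : R -> R) l t : 0 <= t ->
  {in [pred u | 0 <= u <= t] &, injective P} ->
  {in [pred u | t <= u] &, injective P} ->
  (forall i, 0 < x i -> P (x i) = l) ->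
  exists K1 K2 : {set T},
    [disjoint K1 & K2] /\ (K1 != set0 \/ K2 != set0) /\
    [\/ [/\ K1 = set0, t < #|K2|%:R^-1 &
            forall k, x k = if k \in K2 then #|K2|%:R^-1 else 0],
        [/\ K2 = set0, #|K1|%:R^-1 <= t &
            forall k, x k = if k \in K1 then #|K1|%:R^-1 else 0]
      | [/\ K1 != set0, K2 != set0 &
            exists a b, [/\ 0 < a <= t, t < b, P a = P b,
              b = (1 - #|K1|%:R * a) / #|K2|%:R &
              forall k, x k = if k \in K1 then a else if k \in K2 then b else 0]]].
Proof.
move=> t_ge0 injL injR xP.
set K1 := [set i | 0 < x i <= t]; set K2 := [set i | t < x i].
have K12 : [disjoint K1 & K2].
  by apply/pred0P => i /=; rewrite !inE; case: (leP (x i) t); rewrite ?andbF.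
have [a xa] : exists a, forall i, i \in K1 -> x i = a.
  apply: (level_of_inj injL) => i; rewrite !inE => /andP[xi_gt0 xi_le].
  by rewrite (ltW xi_gt0) xi_le; split => //; apply: xP.
have [b xb] : exists b, forall i, i \in K2 -> x i = b.
  apply: (level_of_inj injR) => i; rewrite !inE => xi_gt.
  by rewrite (ltW xi_gt); split => //; apply/xP/(le_lt_trans t_ge0).
have xK k : x k = if k \in K1 then a else if k \in K2 then b else 0.
  case: ifP => [/xa//|]; case: ifP => [/xb//|]; rewrite !inE => /negbT.
  rewrite -leNgt => xk_le /negbT; rewrite xk_le andbT => xk.
  by apply/eqP; rewrite eq_le x_ge0 andbT leNgt.
have Kab : #|K1|%:R * a + #|K2|%:R * b = 1.
  by rewrite -(sum_level2 _ _ K12) -sum_x; apply: eq_bigr.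
have K_neq0 : K1 != set0 \/ K2 != set0.
  have [i xi] := exists_gt0.
  by case: (leP (x i) t) => xi_t; [left|right]; apply/set0Pn; exists i;
    rewrite !inE ?xi ?xi_t.
exists K1, K2; split=> //; split=> //.
have aK i : i \in K1 -> [/\ 0 < a, a <= t & P a = l].
  move=> iK; rewrite -(xa i iK); move: iK; rewrite inE => /andP[xi xi_t].
  by split => //; apply: xP.
have bK i : i \in K2 -> t < b /\ P b = l.
  move=> iK; rewrite -(xb i iK); move: iK; rewrite inE => t_xi.
  by split => //; apply/xP/(le_lt_trans t_ge0).
have [K1_0|[i1 i1K]] := set_0Vmem K1; have [K2_0|[i2 i2K]] := set_0Vmem K2.
- by case: K_neq0; rewrite K1_0 K2_0 eqxx.
- have K2_neq0 : K2 != set0 by apply/set0Pn; exists i2.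
  have [t_b _] := bK _ i2K.
  rewrite K1_0 cards0 mul0r add0r in Kab; rewrite -(level_inv K2_neq0 Kab).
  by apply: Or31; split => // k; rewrite xK K1_0 in_set0.
- have K1_neq0 : K1 != set0 by apply/set0Pn; exists i1.
  have [_ a_le _] := aK _ i1K.
  rewrite K2_0 cards0 mul0r addr0 in Kab; rewrite -(level_inv K1_neq0 Kab).
  by apply: Or32; split => // k; rewrite xK K2_0 in_set0; case: ifP.
- have K1_neq0 : K1 != set0 by apply/set0Pn; exists i1.
  have K2_neq0 : K2 != set0 by apply/set0Pn; exists i2.
  have [a_gt0 a_le Pa] := aK _ i1K; have [t_b Pb] := bK _ i2K.
  apply: Or33; split => //; exists a, b; split; rewrite ?a_gt0 ?Pa ?Pb //.
  by rewrite -[X in X - _]Kab addrAC subrr add0r mulrC mulKf // card_set_neq0.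
Qed.

End Support.

Section Extension.
Variables (R : realFieldType) (m : nat).
Implicit Types (s : 'rV[R]_m).

Lemma sext_lift s (j : 'I_m) : sext (n:=m.+1) s (lift ord_max j) = s 0 j.
Proof. by rewrite /sext /= /bump leqNgt ltn_ord add0n valK. Qed.

Lemma sext_max s : sext (n:=m.+1) s ord_max = 1 - \sum_j s 0 j.
Proof. by rewrite /sext insubF //= ltnn. Qed.

Lemma big_sext s (f : R -> R) :
  \sum_i f (sext (n:=m.+1) s i) = f (1 - \sum_j s 0 j) + \sum_j f (s 0 j).
Proof.
rewrite big_ord_recr /= sext_max addrC; congr (_ + _); apply: eq_bigr => j _.
rewrite -sext_lift; congr (f (sext _ _)); apply: val_inj.
by rewrite /= /bump leqNgt ltn_ord.
Qed.

Lemma sum_sext s : \sum_i sext (n:=m.+1) s i = 1.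
Proof. by rewrite (big_sext s id) subrK. Qed.

Lemma sext_ge0 s : inDelta (n:=m.+1) s -> forall i, 0 <= sext (n:=m.+1) s i.
Proof.
move=> [s_ge0 sum_le1] i; case: (unliftP ord_max i) => [j ->|->].
  by rewrite sext_lift.
by rewrite sext_max subr_ge0.
Qed.

Lemma h_eq0_iff d s :
  h m.+1 d s = 0 <-> proportional (g m.+1 d) (sext (n:=m.+1) s).
Proof.
set G := \sum_i g m.+1 d (sext (n:=m.+1) s i).
have hE : h m.+1 d s = \row_k (s 0 k * G - g m.+1 d (s 0 k)).
  by apply/rowP => k; rewrite !mxE /G big_sext.
split=> [/rowP h0|[l gl]].
  have gs j : g m.+1 d (s 0 j) = G * s 0 j.
    by move: (h0 j); rewrite hE !mxE => /eqP; rewrite subr_eq0 mulrC => /eqP.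
  exists G => i; case: (unliftP ord_max i) => [j ->|->].
    by rewrite sext_lift gs.
  have GE : G = g m.+1 d (1 - \sum_j s 0 j) + G * \sum_j s 0 j.
    by rewrite {1}/G big_sext mulr_sumr; congr (_ + _); apply: eq_bigr.
  by rewrite sext_max mulrBr mulr1 {1}GE addrK.
rewrite hE; have -> : G = l.
  by rewrite /G (eq_bigr _ (fun i _ => gl i)) -mulr_sumr sum_sext mulr1.
by apply/rowP => k; rewrite !mxE -sext_lift gl sext_lift mulrC subrr.
Qed.

End Extension.

Section Convexity.
Variable R : realFieldType.
Implicit Types (x y u v : R).

Lemma expr_tangent_lt_ge0 k x y : 0 <= x -> 0 <= y -> x != y ->
  y ^+ k.+2 + k.+2%:R * y ^+ k.+1 * (x - y) < x ^+ k.+2.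
Proof.
move=> x_ge0 y_ge0 xy; elim: k => [|k IHk].
  have : 0 < (x - y) ^+ 2 by rewrite exprn_even_gt0 // subr_eq0.
  by rewrite !exprS !expr0; lra.
have -> : y ^+ k.+3 + k.+3%:R * y ^+ k.+2 * (x - y) =
    x * (y ^+ k.+2 + k.+2%:R * y ^+ k.+1 * (x - y))
    - k.+2%:R * y ^+ k.+1 * (x - y) ^+ 2.
  by rewrite [y ^+ k.+3]exprS [y ^+ k.+2]exprS -[k.+3]addn1 natrD; ring.
have [x0|x_neq0] := eqVneq x 0.
  subst x; have y_gt0 : 0 < y by rewrite lt_def eq_sym xy.
  by rewrite mul0r sub0r sub0r sqrrN expr0n /= oppr_lt0 !mulr_gt0 ?exprn_gt0.
have x_gt0 : 0 < x by rewrite lt_def x_neq0.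
have : 0 <= k.+2%:R * y ^+ k.+1 * (x - y) ^+ 2.
  by rewrite mulr_ge0 ?sqr_ge0 // mulr_ge0 ?exprn_ge0.
by have := IHk; rewrite -(ltr_pM2l x_gt0) -exprS; lra.
Qed.

Lemma expr_tangent_lt_even k x y : x != y ->
  y ^+ (k.*2).+2 + (k.*2).+2%:R * y ^+ (k.*2).+1 * (x - y) < x ^+ (k.*2).+2.
Proof.
set m := (k.*2).+1.
have sign_m : (-1) ^+ m = -1 :> R by rewrite -signr_odd /= odd_double.
wlog y_ge0 : x y / 0 <= y => [wlog_y|xy].
  have [y_ge0|y_lt0 xy] := leP 0 y; first exact: wlog_y.
  have := wlog_y (- x) (- y); rewrite oppr_ge0 eqr_opp (ltW y_lt0) => /(_ isT xy).
  rewrite (exprNn x) (exprNn y) (exprNn y m) exprS sign_m mulN1r opprK mul1r.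
  by congr (_ < _); ring.
have [x_ge0|x_lt0] := leP 0 x; first exact: expr_tangent_lt_ge0.
have x_pow_gt0 : 0 < x ^+ m.+1 by rewrite exprn_even_gt0 /= ?odd_double ?lt_eqF.
apply: le_lt_trans x_pow_gt0.
have -> : y ^+ m.+1 + m.+1%:R * y ^+ m * (x - y)
    = - (m%:R * y ^+ m.+1 + m.+1%:R * y ^+ m * (- x)).
  by rewrite exprS -[m.+1]addn1 natrD; ring.
have nx_ge0 : 0 <= - x by rewrite oppr_ge0 ltW.
have := mulr_ge0 (ler0n R m) (exprn_ge0 m.+1 y_ge0).
have := mulr_ge0 (mulr_ge0 (ler0n R m.+1) (exprn_ge0 m y_ge0)) nx_ge0.
lra.
Qed.

Lemma expr_secant_lt_even k u v : -1 < u -> u < v ->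
  (u ^+ (k.*2).+2 - 1) * (v + 1) < (v ^+ (k.*2).+2 - 1) * (u + 1).
Proof.
move=> u_gt uv; set D := (k.*2).+2%:R * u ^+ (k.*2).+1.
have := expr_tangent_lt_even k (negbT (lt_eqF u_gt)).
have := expr_tangent_lt_even k (negbT (gt_eqF uv)).
rewrite -signr_odd /= odd_double expr0 -/D; set U := u ^+ _; set V := v ^+ _.
move=> tan_v tan_m1.
have : (U - 1) * (v - u) < D * (u + 1) * (v - u) by rewrite ltr_pM2r; lra.
have : (u + 1) * (U + D * (v - u)) < (u + 1) * V by rewrite ltr_pM2l; lra.
lra.
Qed.

End Convexity.

Section Ratio.
Variable R : realFieldType.
Implicit Types (x y : R).

Lemma g0 n d : g (R:=R) n d 0 = 0.
Proof. by rewrite /g mulr0 sub0r subrr. Qed.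

Lemma g2 n x : g n 2 x = n.+1%:R * x.
Proof. by rewrite /g expr1 opprK subrK. Qed.

Lemma ppoly_hornerM n d x : (ppoly R n d).[x] * x = g n d x.
Proof.
have gpE y : (gpoly R n d).[y] = g n d y by rewrite /gpoly /g !hornerE.
have X_dvd : 'X %| gpoly R n d by rewrite -['X]subr0 dvdp_XsubCl /root gpE g0.
by rewrite -gpE -(divpK X_dvd) hornerMX.
Qed.

(* With c = n + 1 and u = c x - 1, g(x)/x is c times the slope of the chord of
   the even power u ^+ (d - 1) between -1 and u. *)
Lemma g_ratio_lt n d x y : odd d -> (2 <= d)%N ->
  0 < x -> x < y -> g n d x / x < g n d y / y.
Proof.
move=> d_odd d_ge2 x_gt0 xy; have y_gt0 := lt_trans x_gt0 xy.
have [k ->] : exists k, d = (k.*2).+3.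
  exists d./2.-1; move: (odd_double_half d) d_ge2; rewrite d_odd.
  by case: d./2 => [<-|j <-] //=; rewrite doubleS.
rewrite /g /= -signr_odd /= odd_double expr0; set c : R := n.+1%:R.
have c_gt0 : 0 < c by rewrite ltr0Sn.
have := @expr_secant_lt_even R k (c * x - 1) (c * y - 1); rewrite !subrK.
rewrite ltrBrDr addrC subrr mulr_gt0 // ltrD2r ltr_pM2l // => /(_ isT xy).
rewrite ltr_pdivrMr // mulrAC ltr_pdivlMr // => sec.
by rewrite -(ltr_pM2l c_gt0) [c * (_ * y)]mulrCA [c * (_ * x)]mulrCA.
Qed.

End Ratio.

Definition even_zero_pattern (R : realFieldType) (n d : nat) (t : R)
    (x : 'I_n -> R) : Prop :=
  exists K1 K2 : {set 'I_n},
    [disjoint K1 & K2] /\ (K1 != set0 \/ K2 != set0) /\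
    [\/ [/\ K1 = set0, t < (#|K2|%:R)^-1 &
            forall k, x k = if k \in K2 then (#|K2|%:R)^-1 else 0],
        [/\ K2 = set0, (#|K1|%:R)^-1 <= t &
            forall k, x k = if k \in K1 then (#|K1|%:R)^-1 else 0]
      | [/\ K1 != set0, K2 != set0 &
            exists a b : R,
              0 < a /\ a < t /\
              g n d a / a
                - #|K2|%:R * g n d ((1 - #|K1|%:R * a) / #|K2|%:R)
                  / (1 - #|K1|%:R * a) = 0 /\
              b = (1 - #|K1|%:R * a) / #|K2|%:R /\
              t < b /\ b <= 1 /\
              (forall k, x k = if k \in K1 then a else if k \in K2 then b else 0)]].
Arguments even_zero_pattern {R} n d t x.

Section Zeros.
Variables (R : realFieldType) (m d : nat).
Implicit Types (s : 'rV[R]_m) (t : R).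

Lemma odd_h_eq0 s : odd d -> (2 <= d)%N -> inDelta (n:=m.+1) s ->
  h m.+1 d s = 0 -> exists K : {set 'I_m.+1}, K != set0 /\
    forall k, sext (n:=m.+1) s k = if k \in K then #|K|%:R^-1 else 0.
Proof.
move=> d_odd d_ge2 s_in /h_eq0_iff s_prop.
have ratioK (u : R) : 0 < u -> g m.+1 d u / u * u = g m.+1 d u.
  by move=> u_gt0; rewrite divfK ?lt0r_neq0.
have [l sl] := proportional_ratio ratioK s_prop.
have ratio_inj : {in [pred u : R | 0 < u] &, injective (fun u => g m.+1 d u / u)}.
  apply: inc_inj_in.
  by apply: le_mono_in => u v u_gt0 _; apply: g_ratio_lt.
exact: support_one_level (sext_ge0 s_in) (sum_sext s) _ _ ratio_inj sl.
Qed.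

Lemma sstar_gt0 t : is_sstar m.+1 d t -> 0 < t.
Proof.
by case=> n_le_t _ _ _; apply: lt_le_trans n_le_t; rewrite invr_gt0 ltr0Sn.
Qed.

Lemma even_zero_pattern_of_h_eq0 t s : is_sstar m.+1 d t ->
  inDelta (n:=m.+1) s -> h m.+1 d s = 0 ->
  even_zero_pattern m.+1 d t (sext (n:=m.+1) s).
Proof.
move=> t_sstar s_in /h_eq0_iff s_prop; have t_gt0 := sstar_gt0 t_sstar.
case: t_sstar => _ _ p_dec p_inc; set p := ppoly R m.+1 d in p_dec p_inc.
have [l sl] :=
  proportional_ratio (P := horner p) (fun u _ => ppoly_hornerM _ _ u) s_prop.
have injL : {in [pred u : R | 0 <= u <= t] &, injective (horner p)}.
  apply: dec_inj_in; apply: le_nmono_in => v u /andP[_ v_le] /andP[u_ge0 _] uv.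
  exact: p_dec.
have injR : {in [pred u : R | t <= u] &, injective (horner p)}.
  by apply: inc_inj_in; apply: le_mono_in => u v t_le _; apply: p_inc.
have [K1 [K2 [K12 [K_neq0 []]]]] :=
  support_two_levels (sext_ge0 s_in) (sum_sext s) (ltW t_gt0) injL injR sl.
- by exists K1, K2; do 2 split => //; apply: Or31.
- by exists K1, K2; do 2 split => //; apply: Or32.
move=> [K1_neq0 K2_neq0 [a [b [/andP[a_gt0 a_le] t_b p_ab bE xK]]]].
exists K1, K2; do 2 split => //; apply: Or33; split => //; exists a, b.
have b_gt0 := lt_trans t_gt0 t_b.
have K2b : 1 - #|K1|%:R * a = #|K2|%:R * b.
  by rewrite bE mulrCA divff ?mulr1 ?card_set_neq0.
do ![split=> //].
- rewrite lt_neqAle a_le andbT; apply: contra_eq_neq p_ab => a_eq.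
  by rewrite a_eq lt_eqF ?p_inc.
- rewrite (ratio_shift _ _ _ K2b) ?card_set_neq0 ?lt0r_neq0 //.
  rewrite -!ppoly_hornerM !mulfK ?lt0r_neq0 //.
  by apply/eqP; rewrite subr_eq0 p_ab.
- have K1a_ge0 : 0 <= #|K1|%:R * a := mulr_ge0 (ler0n _ _) (ltW a_gt0).
  have K2_ge1 : 1 <= #|K2|%:R :> R by rewrite ler1n card_gt0.
  apply: le_trans (_ : #|K2|%:R * b <= 1); last by rewrite -K2b lerBlDr lerDl.
  by rewrite ler_peMl // ltW.
Qed.

Lemma h_eq0_of_even_zero_pattern t s : is_sstar m.+1 d t ->
  even_zero_pattern m.+1 d t (sext (n:=m.+1) s) -> h m.+1 d s = 0.
Proof.
move=> /sstar_gt0 t_gt0 [K1 [K2 [_ [K_neq0 []]]]].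
- move=> [K1_0 _ xK]; apply/h_eq0_iff; apply: proportional_level1 xK.
    exact: g0.
  by rewrite invr_neq0 // card_set_neq0 //; case: K_neq0; rewrite // K1_0 eqxx.
- move=> [K2_0 _ xK]; apply/h_eq0_iff; apply: proportional_level1 xK.
    exact: g0.
  by rewrite invr_neq0 // card_set_neq0 //; case: K_neq0; rewrite // K2_0 eqxx.
move=> [_ K2_neq0 [a [b [a_gt0 [_ [r_a [bE [t_b [_ xK]]]]]]]]].
have b_gt0 := lt_trans t_gt0 t_b.
have K2b : 1 - #|K1|%:R * a = #|K2|%:R * b.
  by rewrite bE mulrCA divff ?mulr1 ?card_set_neq0.
apply/h_eq0_iff; apply: proportional_level2 xK; rewrite ?g0 ?lt0r_neq0 //.
apply/eqP.
by rewrite -subr_eq0 -(ratio_shift _ _ _ K2b) ?card_set_neq0 ?lt0r_neq0 ?r_a.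
Qed.

End Zeros.

Theorem mainTheorem5 (R : realFieldType) (n d : nat) :
  (2 <= n)%N -> (2 <= d)%N ->
  (* (i) *)
  (forall s : 'rV[R]_(n.-1), inDelta s ->
     (exists K : {set 'I_n}, K != set0 /\
        forall k, sext s k = if k \in K then (#|K|%:R)^-1 else 0) ->
     h n d s = 0)
  /\
  (* (ii) *)
  (d = 2%N -> forall s : 'rV[R]_(n.-1), h n d s = 0)
  /\
  (* (iii) *)
  (odd d -> forall s : 'rV[R]_(n.-1), inDelta s -> h n d s = 0 ->
     exists K : {set 'I_n}, K != set0 /\
        forall k, sext s k = if k \in K then (#|K|%:R)^-1 else 0)
  /\
  (* (iv) *)
  (~~ odd d -> (4 <= d)%N -> forall sstar : R, is_sstar n d sstar ->
   forall s : 'rV[R]_(n.-1), inDelta s ->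
     (h n d s = 0 <->
      exists K1 K2 : {set 'I_n},
        [disjoint K1 & K2] /\ (K1 != set0 \/ K2 != set0) /\
        [\/ (* (a) *)
            [/\ K1 = set0, sstar < (#|K2|%:R)^-1 &
                forall k, sext s k = if k \in K2 then (#|K2|%:R)^-1 else 0],
            (* (b) *)
            [/\ K2 = set0, (#|K1|%:R)^-1 <= sstar &
                forall k, sext s k = if k \in K1 then (#|K1|%:R)^-1 else 0]
          | (* (c) *)
            [/\ K1 != set0, K2 != set0 &
                exists a b : R,
                  0 < a /\ a < sstar /\
                  g n d a / a
                    - #|K2|%:R * g n d ((1 - #|K1|%:R * a) / #|K2|%:R)
                      / (1 - #|K1|%:R * a) = 0 /\
                  b = (1 - #|K1|%:R * a) / #|K2|%:R /\
                  sstar < b /\ b <= 1 /\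
                  (forall k, sext s k =
                        if k \in K1 then a else if k \in K2 then b else 0)]])).
Proof.
case: n => [//|m] _ d_ge2; split; [|split; [|split]].
- move=> s _ [K [K_neq0 xK]]; apply/h_eq0_iff.
  by apply: proportional_level1 xK; rewrite ?g0 ?invr_neq0 ?card_set_neq0.
- by move=> -> s; apply/h_eq0_iff; exists m.+2%:R => i; rewrite g2.
- by move=> d_odd s s_in; apply: odd_h_eq0.
move=> _ _ t t_sstar s s_in; split; first exact: even_zero_pattern_of_h_eq0.
exact: h_eq0_of_even_zero_pattern.
Qed.
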